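(* Let $(X,\|\cdot\|)$ and $(Y,\|\cdot\|)$ be finite-dimensional normed vector spaces and let $T$ be a $Y$-multivalued map on $X$ with $T(u)\neq\varnothing$ for every $u\in X$ which is weakly continuous at every point of $X$. Then $\{x\in X:T(x)\text{ is a singleton}\}$ and $\mathrm{dmn}\,\mathrm{D}T$ are Borel subsets of $X$, and $\mathrm{D}T:\mathrm{dmn}\,\mathrm{D}T\to\mathrm{Hom}(X,Y)$ is a Borel function.
   Context: A $Y$-multivalued map $T$ on $X$ assigns to each $x\in X$ a subset $T(x)\subseteq Y$; if $T(x)$ is a singleton, $T(x)$ also denotes its unique element. $T$ is weakly continuous at $x$ if for every $\varepsilon>0$ there is $\delta>0$ such that $T(y)\subseteq T(x)+\{v\in Y:\|v\|<\varepsilon\}$ whenever $\|y-x\|<\delta$. $T$ is strongly differentiable at $x$ if $T(x)$ is a singleton and there is a linear map $L:X\to Y$ such that for every $\varepsilon>0$ there is $\delta>0$ with $\|w-T(x)-L(y-x)\|\le\varepsilon\|y-x\|$ whenever $\|x-y\|\le\delta$ and $w\in T(y)$; such $L$ is unique and denoted $\mathrm{D}T(x)$, and $\mathrm{dmn}\,\mathrm{D}T$ is the set of points where $T$ is strongly differentiable. *)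

From HB Require Import structures.
From mathcomp Require Import all_boot all_order all_algebra.
From mathcomp Require Import all_classical all_reals all_analysis.
Set Implicit Arguments. Unset Strict Implicit. Unset Printing Implicit Defensive.
Import Order.TTheory GRing.Theory Num.Theory.
Import numFieldNormedType.Exports.
Local Open Scope classical_set_scope.
Local Open Scope ring_scope.

(* A (finite-dimensional, real) normed space is modelled as 'rV[R]_n equipped
   with an ARBITRARY norm N (not necessarily the library's sup norm). *)
Definition is_norm (R : realType) (n : nat) (N : 'rV[R]_n -> R) : Prop :=
  [/\ forall x y, N (x + y) <= N x + N y,
      forall (a : R) x, N (a *: x) = `|a| * N x
    & forall x, N x = 0 -> x = 0].

Definition weakly_continuous_at (R : realType) (n m : nat)
  (NX : 'rV[R]_n -> R) (NY : 'rV[R]_m -> R) (T : 'rV[R]_n -> set 'rV[R]_m)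
  (x : 'rV[R]_n) : Prop :=
  forall e : R, 0 < e -> exists2 d : R, 0 < d &
    forall y, NX (y - x) < d ->
      forall w, T y w -> exists t v, [/\ T x t, NY v < e & w = t + v].

(* Linear maps X -> Y are represented by matrices A : 'M_(n,m), acting by
   v |-> v *m A.  [strong_derivative_at NX NY T x A] says: T(x) is a singleton
   {y0} and A is a strong derivative of T at x. *)
Definition strong_derivative_at (R : realType) (n m : nat)
  (NX : 'rV[R]_n -> R) (NY : 'rV[R]_m -> R) (T : 'rV[R]_n -> set 'rV[R]_m)
  (x : 'rV[R]_n) (A : 'M[R]_(n, m)) : Prop :=
  exists y0, T x = [set y0] /\
    forall e : R, 0 < e -> exists2 d : R, 0 < d &
      forall y, NX (x - y) <= d ->
        forall w, T y w -> NY (w - y0 - (y - x) *m A) <= e * NX (y - x).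

Definition dmnD (R : realType) (n m : nat)
  (NX : 'rV[R]_n -> R) (NY : 'rV[R]_m -> R) (T : 'rV[R]_n -> set 'rV[R]_m) :
  set 'rV[R]_n :=
  [set x | exists A, strong_derivative_at NX NY T x A].

(* DT(x): the (unique) strong derivative at x when x ∈ dmn DT (0 otherwise). *)
Definition DT (R : realType) (n m : nat)
  (NX : 'rV[R]_n -> R) (NY : 'rV[R]_m -> R) (T : 'rV[R]_n -> set 'rV[R]_m)
  (x : 'rV[R]_n) : 'M[R]_(n, m) :=
  xget 0 [set A | strong_derivative_at NX NY T x A].

Definition Borel (S : topologicalType) (A : set S) : Prop := <<s open >> A.

Definition Borel_fun_on (S U : topologicalType) (D : set S) (f : S -> U) : Prop :=
  forall B : set U, Borel B -> Borel (D `&` f @^-1` B).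

(* The set of points where T is single-valued is a G_delta: by weak continuity
   it is the intersection over k of the open sets of points near which T
   oscillates by less than 1/(k+1).
   Call A an (e, d)-approximate derivative of T at such a point x if the
   first-order estimate with error e NX(y - x) holds on the d-ball around x.
   For fixed A, e, d these points form a set that is closed relative to the
   single-valued points, again by weak continuity, hence Borel. Two approximate
   derivatives at the same point differ by at most a constant times the sum of
   their errors, so x is in dmn DT iff for every k it has a rational
   1/(k+1)-approximate derivative on some ball: these form a Cauchy sequence
   whose limit is the strong derivative. This makes dmn DT a countable
   intersection of countable unions of Borel sets, and the preimage under DT of
   an open set U the part of dmn DT lying in the union of those sets whose
   rational matrix is, with some margin, inside U. *)

From HB Require Import structures.
From mathcomp Require Import all_boot all_order all_algebra.
From mathcomp Require Import all_classical all_reals all_analysis.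
From mathcomp Require Import lra.
Import Order.TTheory GRing.Theory Num.Theory.
Import numFieldNormedType.Exports.
Local Open Scope classical_set_scope.
Local Open Scope ring_scope.
Set Implicit Arguments. Unset Strict Implicit. Unset Printing Implicit Defensive.

Local Notation borel S := (g_sigma_algebraType (@open S)).

Section BorelSets.
Variable S : ptopologicalType.
Implicit Types A B : set S.

Lemma Borel_open A : open A -> Borel A.
Proof. exact: sub_sigma_algebra. Qed.

Lemma Borel_closed A : closed A -> Borel A.
Proof.
move=> cA; rewrite -(setCK A); apply: (@measurableC _ (borel S)).
by apply: Borel_open; exact: closed_openC.
Qed.

Lemma BorelI A B : Borel A -> Borel B -> Borel (A `&` B).
Proof. exact: (@measurableI _ (borel S)). Qed.

Lemma Borel_bigcapT (F : nat -> set S) : (forall k, Borel (F k)) -> Borel (\bigcap_k F k).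
Proof. exact: (@bigcapT_measurable _ (borel S)). Qed.

Lemma Borel_bigcup (I : countType) (P : set I) (F : I -> set S) :
  (forall i, P i -> Borel (F i)) -> Borel (\bigcup_(i in P) F i).
Proof.
move=> BF; rewrite bigcup_mkcond; apply: (@countable_bigcupT_measurable _ (borel S)).
  exact: countableP.
by move=> i; case: ifPn => [/set_mem /BF //|_]; exact: (@measurable0 _ (borel S)).
Qed.

Lemma Borel_fun_on_open (U : ptopologicalType) (D : set S) (f : S -> U) : Borel D ->
  (forall V, open V -> Borel (D `&` f @^-1` V)) -> Borel_fun_on D f.
Proof.
move=> BD Bf B BB; apply: (@measurability _ _ (borel S) (borel U) D f open) => //.
by move=> _ [V oV <-]; exact: Bf.
Qed.

End BorelSets.

Lemma set1_inj (T : Type) : injective (@set1 T).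
Proof. by move=> a b ab; have : [set b] a by rewrite -ab. Qed.

Lemma natSinv_gt0 (R : numFieldType) (k : nat) : 0 < k.+1%:R^-1 :> R.
Proof. by rewrite invr_gt0. Qed.

Lemma natSinv_lt (R : realType) (e : R) : 0 < e -> exists k : nat, k.+1%:R^-1 < e.
Proof.
by move=> e0; have [k _ hk] := near_infty_natSinv_lt (PosNum e0); exists k; exact: (hk k (leqnn k)).
Qed.

Lemma cvg_natSinv_rate (R : realType) p q (u : nat -> 'M[R]_(p, q)) (c : R) :
  (forall k l, `|u k - u l| <= c * (k.+1%:R^-1 + l.+1%:R^-1)) ->
  exists u0, forall k, `|u k - u0| <= c * k.+1%:R^-1.
Proof.
move=> h.
have rate0 : (fun k => c * k.+1%:R^-1) @ \oo --> (0 : R).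
  by rewrite -(mulr0 c); apply: cvgM; [exact: cvg_cst | exact: cvg_harmonic].
have small (e : R) : 0 < e -> \forall k \near \oo, c * k.+1%:R^-1 < e.
  by move=> e0; apply: cvgr_lt rate0 _ _.
have /cauchy_cvgP cu : cauchy (u @ \oo).
  apply: cauchy_exP => e e0; near \oo => k.
  have hk : c * k.+1%:R^-1 < e / 2 by near: k; apply: (small (e / 2)); rewrite divr_gt0.
  exists (u k); change (\forall l \near \oo, ball (u k) e (u l)); near=> l.
  have hl : c * l.+1%:R^-1 < e / 2 by near: l; apply: (small (e / 2)); rewrite divr_gt0.
  rewrite -ball_normE /=; apply: le_lt_trans (h k l) _.
  by rewrite mulrDr [e]splitr; exact: ltrD.
exists (lim (u @ \oo)) => k; apply/ler_addgt0Pr => e e0.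
near \oo => l.
have hl : c * l.+1%:R^-1 < e / 2 by near: l; apply: (small (e / 2)); rewrite divr_gt0.
have hul : `|u l - lim (u @ \oo)| < e / 2.
  by rewrite distrC; near: l; apply: (cvgrPdist_lt _ _).1 cu _ _; rewrite divr_gt0.
apply: le_trans (ler_distD (u l) _ _) _; apply: le_trans (lerD (h k l) (ltW hul)) _.
by rewrite mulrDr -addrA lerD2l [leRHS]splitr lerD2r ltW.
Unshelve. all: by end_near.
Qed.

Section MatrixNorm.
Variable R : realDomainType.

Lemma ler_entry_mx_norm p q (M : 'M[R]_(p, q)) i j : `|M i j| <= `|M|.
Proof.
rewrite [`|M|]mx_normrE.
exact: (le_bigmax _ (fun ij : 'I_p * 'I_q => `|M ij.1 ij.2|) (i, j)).
Qed.

Lemma mx_norm_le p q (M : 'M[R]_(p, q)) r :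
  0 <= r -> (forall i j, `|M i j| <= r) -> `|M| <= r.
Proof. by move=> r0 h; rewrite [`|M|]mx_normrE; apply: bigmax_le => // -[i j] _; exact: h. Qed.

Lemma mx_norm_mulmx_le p q (v : 'rV[R]_p) (B : 'M[R]_(p, q)) :
  `|v *m B| <= p%:R * (`|v| * `|B|).
Proof.
apply: mx_norm_le => [|i j]; first by rewrite !mulr_ge0.
rewrite !mxE; apply: le_trans (ler_norm_sum _ _ _) _.
apply: le_trans (_ : \sum_(k < p) `|v| * `|B| <= _).
  by apply: ler_sum => k _; rewrite normrM ler_pM // ler_entry_mx_norm.
by rewrite sumr_const card_ord mulr_natl.
Qed.

End MatrixNorm.

Lemma rat_mx_approx (R : realType) p q (A : 'M[R]_(p, q)) r :
  0 < r -> exists Q : 'M[rat]_(p, q), `|A - map_mx ratr Q| < r.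
Proof.
move=> r0.
have r20 : 0 < r / 2 by rewrite divr_gt0.
have ratQ (ij : 'I_p * 'I_q) : exists x : rat, `|A ij.1 ij.2 - ratr x| < r / 2.
  have [z [Az [x _ xz]]] := dense_rat (ex_intro _ _ (ballxx (A ij.1 ij.2) r20))
    (ball_open (A ij.1 ij.2) (r / 2)).
  by exists x; rewrite xz; exact: Az.
have [g hg] := choice ratQ.
exists (\matrix_(i, j) g (i, j)); apply: le_lt_trans (_ : r / 2 < r); last lra.
apply: mx_norm_le => [|i j]; first exact: ltW.
by rewrite !mxE; exact: ltW (hg (i, j)).
Qed.

Section IsNorm.
Variables (R : realType) (n : nat) (N : 'rV[R]_n -> R).
Hypothesis hN : is_norm N.

Lemma is_normD x y : N (x + y) <= N x + N y.
Proof. by case: hN. Qed.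

Lemma is_normZ (a : R) x : N (a *: x) = `|a| * N x.
Proof. by case: hN. Qed.

Lemma is_norm_eq0 x : N x = 0 -> x = 0.
Proof. by case: hN => _ _; apply. Qed.

Lemma is_norm0 : N 0 = 0.
Proof. by rewrite -(scale0r 0) is_normZ normr0 mul0r. Qed.

Lemma is_normN x : N (- x) = N x.
Proof. by rewrite -scaleN1r is_normZ normrN normr1 mul1r. Qed.

Lemma is_normB x y : N (x - y) = N (y - x).
Proof. by rewrite -is_normN opprB. Qed.

Lemma is_norm_ge0 x : 0 <= N x.
Proof.
have := is_normD x (- x); rewrite subrr is_norm0 is_normN -mulr2n.
by rewrite pmulrn_lge0.
Qed.

Lemma is_norm_distD x y z : N (x - z) <= N (x - y) + N (y - z).
Proof. by have := is_normD (x - y) (y - z); rewrite addrA subrK. Qed.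

Lemma is_norm_sum k (f : 'I_k -> 'rV[R]_n) : N (\sum_i f i) <= \sum_i N (f i).
Proof.
apply: (big_ind2 (fun a b => N a <= b)) => [|a1 b1 a2 b2 h1 h2|//].
  by rewrite is_norm0.
exact: le_trans (is_normD _ _) (lerD h1 h2).
Qed.

Lemma is_norm_le_mx_norm : exists2 C, 0 < C & forall x, N x <= C * `|x|.
Proof.
pose C := \sum_(j < n) N (delta_mx 0 j).
have C0 : 0 <= C by apply: sumr_ge0 => j _; exact: is_norm_ge0.
exists (C + 1) => [|x]; first lra.
rewrite {1}(row_sum_delta x); apply: le_trans (is_norm_sum _) _.
apply: (@le_trans _ _ (C * `|x|)); last by rewrite ler_wpM2r // lerDl.
rewrite mulr_suml; apply: ler_sum => j _.
by rewrite is_normZ mulrC ler_wpM2l ?is_norm_ge0 // ler_entry_mx_norm.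
Qed.

Lemma near_is_norm_lt (x : 'rV[R]_n) (r : R) : 0 < r -> \forall z \near x, N (z - x) < r.
Proof.
move=> r0; have [C C0 hC] := is_norm_le_mx_norm.
apply/(@nbhs_normP _ 'rV[R]_n); exists (r / C) => [|z /= xz]; first exact: divr_gt0.
by apply: le_lt_trans (hC _) _; rewrite distrC mulrC -ltr_pdivlMr.
Qed.

Lemma is_norm_continuous : continuous N.
Proof.
move=> x; apply/(@cvgrPdist_lt _ _ _ (nbhs x) (nbhs_filter x)) => e e0.
apply: filterS (near_is_norm_lt x e0) => y; apply: le_lt_trans.
have := is_norm_distD x y 0; have := is_norm_distD y x 0.
rewrite !subr0 [N (x - y)]is_normB => h1 h2.
by rewrite ler_norml; apply/andP; split; lra.
Qed.

(* [c] is the minimum of [N] on the unit sphere of the sup norm, by compactness. *)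
Lemma mx_norm_le_is_norm : exists2 c, 0 < c & forall x, c * `|x| <= N x.
Proof.
pose S := [set x : 'rV[R]_n | `|x| = 1].
have S_normalize x : x != 0 -> S (`|x|^-1 *: x).
  move=> x0; rewrite /S /= normrZ normrV ?unitfE ?normr_eq0 // normr_id.
  by rewrite mulVf ?normr_eq0.
have [[s Ss]|S0] := pselect (S !=set0); last first.
  exists 1 => // x; have [->|/S_normalize Sx] := eqVneq x 0.
    by rewrite normr0 mulr0 is_norm_ge0.
  by exfalso; apply: S0; eexists; exact: Sx.
have cS : compact S.
  apply: bounded_closed_compact.
    by exists 1; split => // M M1 y /= ->; exact: ltW.
  apply: (@preimage_closed _ _ (fun x : 'rV[R]_n => `|x|) [set 1]); last exact: closed_eq.
  by move=> y _; exact: norm_continuous.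
have [c /set_mem Sc minc] :=
  EVT_min_rV (ex_intro _ s Ss) cS (continuous_subspaceT is_norm_continuous).
have c0 : c != 0.
  by apply/eqP => c0; move: Sc; rewrite /S /= c0 normr0 => /eqP; rewrite eq_sym oner_eq0.
exists (N c) => [|x].
  by rewrite lt_def is_norm_ge0 andbT; apply: contra_neq c0; exact: is_norm_eq0.
have [->|x0] := eqVneq x 0; first by rewrite normr0 mulr0 is_norm_ge0.
have := minc _ (mem_set (S_normalize _ x0)).
rewrite is_normZ normrV ?unitfE ?normr_eq0 // normr_id.
by rewrite ler_pdivlMl ?normr_gt0 // mulrC.
Qed.

End IsNorm.

Section MulmxBounds.
Variables (R : realType) (n m : nat) (NX : 'rV[R]_n -> R) (NY : 'rV[R]_m -> R).
Hypotheses (hX : is_norm NX) (hY : is_norm NY).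

Lemma is_norm_mulmx_le : exists2 K, 0 < K & forall v B, NY (v *m B) <= K * `|B| * NX v.
Proof.
have [CY CY0 hCY] := is_norm_le_mx_norm hY; have [cX cX0 hcX] := mx_norm_le_is_norm hX.
exists (CY * n.+1%:R / cX) => [|v B]; first by rewrite !mulr_gt0 ?invr_gt0.
apply: le_trans (hCY _) _; rewrite -!mulrA ler_pM2l //.
apply: le_trans (mx_norm_mulmx_le v B) _.
apply: ler_pM; rewrite ?mulr_ge0 ?ler_nat //.
by rewrite mulrCA [`|v| * _]mulrC; apply: ler_wpM2l => //; rewrite ler_pdivlMl.
Qed.

Lemma mx_norm_le_is_norm_mulmx : exists2 K, 0 < K &
  forall B c, 0 <= c -> (forall v, NY (v *m B) <= c * NX v) -> `|B| <= K * c.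
Proof.
have [CX CX0 hCX] := is_norm_le_mx_norm hX; have [cY cY0 hcY] := mx_norm_le_is_norm hY.
exists (CX / cY) => [|B c c0 hB]; first by rewrite divr_gt0.
apply: mx_norm_le => [|i j]; first by rewrite mulr_ge0 // divr_ge0 // ltW.
have deltaX : NX (delta_mx 0 i) <= CX.
  apply: le_trans (hCX _) _; apply: ler_piMr; first exact: ltW.
  by apply: mx_norm_le => // a b; rewrite mxE; case: (_ && _); rewrite ?normr1 ?normr0.
have -> : B i j = row i B 0 j by rewrite mxE.
apply: le_trans (ler_entry_mx_norm _ _ _) _.
rewrite mulrAC ler_pdivlMr // mulrC; apply: le_trans (hcY _) _.
by rewrite rowE; apply: le_trans (hB _) _; rewrite mulrC ler_wpM2r.
Qed.
End MulmxBounds.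

Section MultivaluedMap.
Variables (R : realType) (n m : nat) (NX : 'rV[R]_n -> R) (NY : 'rV[R]_m -> R)
  (T : 'rV[R]_n -> set 'rV[R]_m).
Hypotheses (hX : is_norm NX) (hY : is_norm NY) (hT : forall u, T u !=set0)
  (hW : forall x, weakly_continuous_at NX NY T x).
(* Both constants come from the equivalence of norms in finite dimension, see
   [is_norm_mulmx_le] and [mx_norm_le_is_norm_mulmx]. *)
Variables (Kop Kmx : R).
Hypotheses (Kop_gt0 : 0 < Kop) (Kmx_gt0 : 0 < Kmx)
  (mulmx_le_Kop : forall v B, NY (v *m B) <= Kop * `|B| * NX v)
  (mx_norm_le_Kmx : forall B c, 0 <= c ->
    (forall v, NY (v *m B) <= c * NX v) -> `|B| <= Kmx * c).

Definition single_pts := [set x | exists y, T x = [set y]].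

Definition osc_lt e := [set x | exists2 d, 0 < d & forall y1 y2 w1 w2,
  NX (y1 - x) < d -> NX (y2 - x) < d -> T y1 w1 -> T y2 w2 -> NY (w1 - w2) < e].

Lemma open_osc_lt e : open (osc_lt e).
Proof.
rewrite openE => x [d d0 hd]; near=> z.
have zx : NX (z - x) < d / 2 by near: z; apply: near_is_norm_lt => //; rewrite divr_gt0.
exists (d / 2) => [|y1 y2 w1 w2 h1 h2]; first by rewrite divr_gt0.
by apply: hd; apply: le_lt_trans (is_norm_distD hX _ z _) _; lra.
Unshelve. all: by end_near.
Qed.

Lemma single_pts_osc_lt : single_pts = \bigcap_k osc_lt k.+1%:R^-1.
Proof.
apply/seteqP; split => x.
  move=> [y0 Tx] k _; have e20 : 0 < k.+1%:R^-1 / 2 :> R by rewrite divr_gt0.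
  have [d d0 hd] := hW x e20; exists d => // y1 y2 w1 w2 h1 h2 T1 T2.
  have [t1 [v1 [+ v1e ->]]] := hd y1 h1 w1 T1; rewrite Tx => ->.
  have [t2 [v2 [+ v2e ->]]] := hd y2 h2 w2 T2; rewrite Tx => ->.
  rewrite opprD addrACA subrr add0r; apply: le_lt_trans (is_normD hY _ _) _.
  by rewrite is_normN // [ltRHS]splitr ltrD.
move=> oscx; have [y0 Ty0] := hT x; exists y0; apply/seteqP; split => [w Tw|_ -> //].
apply/eqP; rewrite -subr_eq0; apply/eqP/(is_norm_eq0 hY)/le_anti.
rewrite is_norm_ge0 // andbT; apply/ler_addgt0Pr => e e0; rewrite add0r.
have [k ke] := natSinv_lt e0; have [d d0 hd] := oscx k I.
by apply/ltW/(lt_trans _ ke)/(hd x x) => //; rewrite subrr is_norm0.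
Qed.

Lemma Borel_single_pts : Borel single_pts.
Proof.
by rewrite single_pts_osc_lt; apply: Borel_bigcapT => k; apply: Borel_open; exact: open_osc_lt.
Qed.

Definition approx_deriv x y0 A e d := forall y, NX (x - y) < d ->
  forall w, T y w -> NY (w - y0 - (y - x) *m A) <= e * NX (y - x).

Definition approx_set A e d :=
  [set x | exists2 y0, T x = [set y0] & approx_deriv x y0 A e d].

Lemma approx_deriv_le x y0 A e e' d d' : approx_deriv x y0 A e d ->
  e <= e' -> d' <= d -> approx_deriv x y0 A e' d'.
Proof.
move=> hA ee' d'd y xy w Tw; apply: le_trans (hA y (lt_le_trans xy d'd) w Tw) _.
by rewrite ler_wpM2r // is_norm_ge0.
Qed.

(* Both estimates are compared at a point [x + t v] lying in both balls, where
   [T] has some value [w]. *)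
Lemma approx_deriv_mulmx_le x y0 A1 A2 e1 e2 d1 d2 : 0 < d1 -> 0 < d2 ->
  approx_deriv x y0 A1 e1 d1 -> approx_deriv x y0 A2 e2 d2 ->
  forall v, NY (v *m (A1 - A2)) <= (e1 + e2) * NX v.
Proof.
move=> d10 d20 h1 h2 v.
have Nv0 := is_norm_ge0 hX v.
pose t := Num.min d1 d2 / (NX v + 1).
have dd0 : 0 < Num.min d1 d2 by rewrite lt_min d10.
have t0 : 0 < t by rewrite divr_gt0 //; lra.
have tv : NX (t *: v) < Num.min d1 d2.
  by rewrite is_normZ // gtr0_norm // mulrAC ltr_pdivrMr ?ltr_pM2l //; lra.
move: tv; rewrite lt_min => /andP[tv1 tv2].
pose y := x + t *: v.
have xy : NX (x - y) = NX (t *: v) by rewrite /y opprD addNKr is_normN.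
have yx : y - x = t *: v by rewrite /y addrAC subrr add0r.
have [w Tw] := hT y.
have key : NY (t *: (v *m (A1 - A2))) <= (e1 + e2) * NX (t *: v).
  rewrite scalemxAl -yx.
  have -> : (y - x) *m (A1 - A2) = (w - y0 - (y - x) *m A2) - (w - y0 - (y - x) *m A1).
    by rewrite mulmxBr opprD addrACA subrr add0r opprK addrC.
  apply: le_trans (is_normD hY _ _) _; rewrite is_normN // mulrDl addrC.
  by apply: lerD; [apply: h1 | apply: h2] => //; rewrite xy.
by move: key; rewrite !is_normZ // mulrCA ler_pM2l ?normr_gt0 ?gt_eqF.
Qed.

Lemma approx_deriv_close x y0 A1 A2 e1 e2 d1 d2 :
  0 <= e1 -> 0 <= e2 -> 0 < d1 -> 0 < d2 ->
  approx_deriv x y0 A1 e1 d1 -> approx_deriv x y0 A2 e2 d2 ->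
  `|A1 - A2| <= Kmx * (e1 + e2).
Proof.
move=> e10 e20 d10 d20 h1 h2; apply: mx_norm_le_Kmx; first exact: addr_ge0.
exact: approx_deriv_mulmx_le d10 d20 h1 h2.
Qed.

Lemma approx_deriv_perturb x y0 A B e d : approx_deriv x y0 A e d ->
  approx_deriv x y0 B (e + Kop * `|A - B|) d.
Proof.
move=> hA y xy w Tw.
have -> : w - y0 - (y - x) *m B = (w - y0 - (y - x) *m A) + (y - x) *m (A - B).
  by rewrite mulmxBr addrA subrK.
apply: le_trans (is_normD hY _ _) _; rewrite mulrDl.
exact: lerD (hA y xy w Tw) (mulmx_le_Kop _ _).
Qed.

Lemma approx_deriv_shift x z y y0 y1 w A e d : 0 <= e ->
  approx_deriv z y1 A e d -> NX (z - y) < d -> T y w ->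
  NY (w - y0 - (y - x) *m A)
    <= e * NX (y - x) + (e + Kop * `|A|) * NX (z - x) + NY (y1 - y0).
Proof.
move=> e0 hA zy Tw.
have -> : w - y0 - (y - x) *m A = (w - y1 - (y - z) *m A) + (x - z) *m A + (y1 - y0).
  rewrite !mulmxBl; move: (x *m A) (y *m A) (z *m A) => a b c.
  by apply/rowP => j; rewrite !mxE; lra.
apply: le_trans (is_normD hY _ _) _; rewrite lerD2r mulrDl addrA.
apply: le_trans (is_normD hY _ _) _; apply: lerD.
  apply: le_trans (hA y zy w Tw) _; rewrite -mulrDr ler_wpM2l //.
  by rewrite [NX (z - x)]is_normB //; exact: is_norm_distD.
by rewrite -[NX (z - x)]is_normB //; exact: mulmx_le_Kop.
Qed.

(* Near [x], the single value of [T] is close to [y0] by weak continuity at [x],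
   so the estimate at nearby points of [approx_set A e d] passes to [x]. *)
Lemma approx_set_closure A e d : 0 <= e ->
  single_pts `&` closure (approx_set A e d) `<=` approx_set A e d.
Proof.
move=> e0 x [[y0 Tx] clx]; exists y0 => // y xy w Tw.
apply/ler_addgt0Pr => eta eta0; have eta20 : 0 < eta / 2 by rewrite divr_gt0.
have [dw dw0 hdw] := hW x eta20.
have KA0 : 0 < e + Kop * `|A| + 1.
  by rewrite ltr_wpDl // addr_ge0 // mulr_ge0 // ltW.
pose r := Num.min (d - NX (x - y)) (Num.min dw (eta / 2 / (e + Kop * `|A| + 1))).
have r0 : 0 < r by rewrite !lt_min subr_gt0 xy dw0 !divr_gt0.
have [z [[y1 Tz hz] zx]] := clx _ (near_is_norm_lt hX x r0).
move: zx; rewrite /= !lt_min => /andP[zxy /andP[zxw zxeta]].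
have Ty1 : T z y1 by rewrite Tz.
have [t [v [Tt v_lt y1E]]] := hdw z zxw y1 Ty1.
have y1y0 : y1 - y0 = v by move: Tt; rewrite Tx y1E => ->; rewrite addrC addKr.
have zy : NX (z - y) < d.
  by apply: le_lt_trans (is_norm_distD hX _ x _) _; lra.
apply: le_trans (approx_deriv_shift x y0 e0 hz zy Tw) _.
rewrite -addrA lerD2l y1y0 [leRHS]splitr; apply/ltW/ltrD => //.
apply: le_lt_trans (_ : (e + Kop * `|A| + 1) * NX (z - x) < _); last first.
  by rewrite mulrC -ltr_pdivlMr.
by rewrite ler_wpM2r ?is_norm_ge0 // lerDl.
Qed.

Lemma Borel_approx_set A e d : 0 <= e -> Borel (approx_set A e d).
Proof.
move=> e0; have -> : approx_set A e d = single_pts `&` closure (approx_set A e d).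
  apply/seteqP; split => [x Ax|]; last exact: approx_set_closure.
  by split; [case: Ax => y0 Tx _; exists y0 | exact: subset_closure].
exact: BorelI Borel_single_pts (Borel_closed (@closed_closure _ _)).
Qed.

Lemma strong_derivative_approxP x A : strong_derivative_at NX NY T x A <->
  exists2 y0, T x = [set y0] &
    forall e, 0 < e -> exists2 d, 0 < d & approx_deriv x y0 A e d.
Proof.
split => [[y0 [Tx hA]]|[y0 Tx hA]]; exists y0 => //.
  move=> e e0; have [d d0 hd] := hA e e0.
  by exists d => // y xy; apply: hd; exact: ltW.
split => // e e0; have [d d0 hd] := hA e e0.
exists (d / 2) => [|y xy]; first by rewrite divr_gt0.
by apply: hd; lra.
Qed.

Lemma approx_set_rat x A0 r e : strong_derivative_at NX NY T x A0 -> 0 < r -> 0 < e ->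
  exists (Q : 'M[rat]_(n, m)) (j : nat),
    `|A0 - map_mx ratr Q| < r /\ approx_set (map_mx ratr Q) e j.+1%:R^-1 x.
Proof.
move=> /strong_derivative_approxP[y0 Tx hA0] r0 e0.
have e20 : 0 < e / 2 by rewrite divr_gt0.
have r'0 : 0 < Num.min r (e / 2 / Kop) by rewrite lt_min r0 divr_gt0.
have [Q] := rat_mx_approx A0 r'0.
rewrite lt_min => /andP[QA0 QA0e].
have [d d0 hd] := hA0 _ e20; have [j jd] := natSinv_lt d0.
exists Q, j; split => //; exists y0 => //.
apply: approx_deriv_le (approx_deriv_perturb (map_mx ratr Q) hd) _ (ltW jd).
by rewrite [leRHS]splitr lerD2l -ler_pdivlMl // mulrC ltW.
Qed.

Lemma approx_set_natSinv_dmnD x (A : nat -> 'M[R]_(n, m)) (d : nat -> R) :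
  (forall k, 0 < d k) -> (forall k, approx_set (A k) k.+1%:R^-1 (d k) x) ->
  dmnD NX NY T x.
Proof.
move=> d0 hA; have [y0 Tx _] := hA 0%N.
have hA' k : approx_deriv x y0 (A k) k.+1%:R^-1 (d k).
  by case: (hA k) => y1 Tx1; rewrite (@set1_inj _ y0 y1) // -Tx.
have [A0 AA0] : exists A0, forall k, `|A k - A0| <= Kmx * k.+1%:R^-1.
  apply: cvg_natSinv_rate => k l.
  by apply: approx_deriv_close (hA' k) (hA' l); rewrite ?ltW ?natSinv_gt0.
exists A0; apply/strong_derivative_approxP; exists y0 => // e e0.
have K0 : 0 < 1 + Kop * Kmx by have := mulr_gt0 Kop_gt0 Kmx_gt0; lra.
have [k] := natSinv_lt (divr_gt0 e0 K0); rewrite ltr_pdivlMr // => ke.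
exists (d k) => //; apply: approx_deriv_le (approx_deriv_perturb A0 (hA' k)) _ (lexx _).
apply: le_trans (lerD (lexx _) (ler_wpM2l (ltW Kop_gt0) (AA0 k))) _.
by rewrite mulrA -[X in X + _]mul1r -mulrDl mulrC ltW.
Qed.

Lemma dmnDE : dmnD NX NY T =
  \bigcap_k \bigcup_j \bigcup_(Q : 'M[rat]_(n, m))
    approx_set (map_mx ratr Q) k.+1%:R^-1 j.+1%:R^-1.
Proof.
apply/seteqP; split => [x [A0 hA0] k _|x hx].
  have [Q [j [_ hQ]]] := approx_set_rat hA0 ltr01 (natSinv_gt0 _ k).
  by exists j => //; exists Q.
have /choice[g hg] : forall k, exists jQ : nat * 'M[rat]_(n, m),
    approx_set (map_mx ratr jQ.2) k.+1%:R^-1 jQ.1.+1%:R^-1 x.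
  by move=> k; have [j _ [Q _ hQ]] := hx k I; exists (j, Q).
exact: (approx_set_natSinv_dmnD (fun k => natSinv_gt0 _ (g k).1) hg).
Qed.

Lemma Borel_dmnD : Borel (dmnD NX NY T).
Proof.
rewrite dmnDE; apply: Borel_bigcapT => k; apply: Borel_bigcup => j _.
apply: Borel_bigcup => Q _; apply: Borel_approx_set; exact/ltW/natSinv_gt0.
Qed.

Lemma DT_strong_derivative x : dmnD NX NY T x ->
  strong_derivative_at NX NY T x (DT NX NY T x).
Proof. exact: xgetPex. Qed.

Lemma DT_approx_set x A e d : dmnD NX NY T x -> 0 < e -> 0 < d ->
  approx_set A e d x -> `|DT NX NY T x - A| <= Kmx * (e + e).
Proof.
move=> /DT_strong_derivative/strong_derivative_approxP[y0 Tx hDT] e0 d0 [y1 Tx1 hA].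
have [d' d'0 hd'] := hDT e e0; rewrite Tx in Tx1; rewrite (set1_inj Tx1) in hd'.
exact: approx_deriv_close (ltW e0) (ltW e0) d'0 d0 hd' hA.
Qed.

(* [approx_set Q] at level [1/(k+1)] puts [DT x] within [2 Kmx/(k+1)] of [Q]
   (by [DT_approx_set]); the radius [3 Kmx/(k+1)] leaves room for that. *)
Lemma Borel_DT_preimage_open U : open U ->
  Borel (dmnD NX NY T `&` DT NX NY T @^-1` U).
Proof.
move=> oU.
pose good k := [set Q : 'M[rat]_(n, m) |
  forall Z, `|map_mx ratr Q - Z| < 3 * Kmx * k.+1%:R^-1 -> U Z].
have -> : dmnD NX NY T `&` DT NX NY T @^-1` U = dmnD NX NY T `&`
    \bigcup_k \bigcup_j \bigcup_(Q in good k)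
      approx_set (map_mx ratr Q) k.+1%:R^-1 j.+1%:R^-1.
  apply/seteqP; split => x [Dx]; last first.
    move=> [k _ [j _ [Q goodQ hQ]]]; split => //; apply: goodQ; rewrite distrC.
    apply: le_lt_trans (DT_approx_set Dx _ _ hQ) _; rewrite ?natSinv_gt0 //.
    rewrite [3 * Kmx]mulrC -mulrA ltr_pM2l //.
    by have := natSinv_gt0 R k; set a := k.+1%:R^-1; lra.
  move=> DxU; split => //.
  have [r r0 rU] : exists2 r, 0 < r & forall Z, `|DT NX NY T x - Z| < r -> U Z.
    rewrite openE in oU; have /(@nbhs_normP _ 'M[R]_(n, m))[r r0 rU] := oU _ DxU.
    by exists r.
  have r20 : 0 < r / 2 by rewrite divr_gt0.
  have [k] := natSinv_lt (divr_gt0 r20 (mulr_gt0 (ltr0n _ 3) Kmx_gt0)).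
  rewrite ltr_pdivlMr ?mulr_gt0 // => kr.
  have [Q [j [DTQ hQ]]] := approx_set_rat (DT_strong_derivative Dx) r20 (natSinv_gt0 _ k).
  exists k => //; exists j => //; exists Q => // Z QZ; apply: rU.
  apply: le_lt_trans (ler_distD (map_mx ratr Q) _ _) _.
  by rewrite [r]splitr ltrD // (lt_trans QZ) // mulrC.
apply: BorelI Borel_dmnD _; apply: Borel_bigcup => k _; apply: Borel_bigcup => j _.
apply: Borel_bigcup => Q _; apply: Borel_approx_set; exact/ltW/natSinv_gt0.
Qed.

Lemma Borel_fun_on_DT : Borel_fun_on (dmnD NX NY T) (DT NX NY T).
Proof. exact: Borel_fun_on_open Borel_dmnD Borel_DT_preimage_open. Qed.

End MultivaluedMap.

Theorem lemma2p1 (R : realType) (n m : nat)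
  (NX : 'rV[R]_n -> R) (NY : 'rV[R]_m -> R) (T : 'rV[R]_n -> set 'rV[R]_m) :
  is_norm NX -> is_norm NY ->
  (forall u, T u !=set0) ->
  (forall x, weakly_continuous_at NX NY T x) ->
  [/\ Borel [set x | exists y, T x = [set y]],
      Borel (dmnD NX NY T)
    & Borel_fun_on (dmnD NX NY T) (DT NX NY T)].
Proof.
move=> hX hY hT hW.
have [Kop Kop_gt0 hKop] := is_norm_mulmx_le hX hY.
have [Kmx Kmx_gt0 hKmx] := mx_norm_le_is_norm_mulmx hX hY.
split.
- exact: (Borel_single_pts hX hY hT hW).
- exact: (Borel_dmnD hX hY hT hW Kop_gt0 Kmx_gt0 hKop hKmx).
- exact: (Borel_fun_on_DT hX hY hT hW Kop_gt0 Kmx_gt0 hKop hKmx).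
Qed.
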